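(* Let $p$ be an odd prime and let $d \geq 3$ be an odd integer. Suppose there exists a positive integer $t$ with $p^t \equiv -1 \pmod d$, and take $t$ minimal. Let $q=p^v \equiv 1 \pmod{2d}$. Then $v=2ts$ for some positive integer $s$. If $s$ is even, then $\omega\big(GP(q,d)\big)<\sqrt{q}$. If $s$ is odd, then $d \mid (\sqrt{q}+1)$ and $\omega\big(GP(q,d)\big)=\sqrt{q}$.
   Context: $GP(q,d)$ is the graph on $\mathbb{F}_q$ in which distinct $x,y$ are adjacent iff $x-y$ is a $d$-th power in $\mathbb{F}_q^*$; $\omega$ denotes clique number. *)

From mathcomp Require Import all_boot all_order all_algebra all_field.
Set Implicit Arguments. Unset Strict Implicit. Unset Printing Implicit Defensive.
Import GRing.Theory.
Local Open Scope ring_scope.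

(* Generalized Paley graph GP(q,d) on a finite field F (|F| = q):
   distinct x, y adjacent iff x - y is a d-th power of a nonzero element. *)
Definition gp_adj (F : finFieldType) (d : nat) (x y : F) : bool :=
  (x != y) && [exists z : F, (z != 0) && (z ^+ d == x - y)].

Definition gp_clique (F : finFieldType) (d : nat) (S : {set F}) : bool :=
  [forall x in S, forall y in S, (x != y) ==> gp_adj d x y].

Definition gp_omega (F : finFieldType) (d : nat) : nat :=
  (\max_(S : {set F} | gp_clique d S) #|S|)%N.

(* The residue of p modulo d has multiplicative order 2t, so v = 2ts and
   Q := p^(ts) = sqrt q is congruent to (-1)^s modulo d.  Let g generate F^*;
   as d > 2, neither g nor g^2 is a d-th power.  If C is a clique and a is not
   a d-th power, (x, y) |-> x + a y is injective on C x C, so |C| <= Q, with a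
   bijection onto F when |C| = Q.  For s odd, d | Q + 1, so every nonzero
   element of the subfield {x | x^Q = x} is a (Q + 1)-th, hence a d-th, power
   and this subfield is a clique of size Q.  For s even, d | Q - 1; a clique C
   of size Q would give two counts of the solutions of
   u1 (v1 - w1) + u2 g (v2 - w2) = g^2 with u1, u2 nonzero d-th powers and
   v, w in C x C: |H|^2 Q^2 by the bijection (H the group of d-th powers,
   |H| d = Q^2 - 1), and Q^2 (Q - 1)^2 N by rescaling u, where N counts the
   case v1 - w1 = v2 - w2 = 1.  Hence (Q + 1)^2 = N d^2, so d | Q + 1 and
   d | 2. *)

From mathcomp Require Import all_boot all_order all_algebra all_field all_solvable zify ring.
Set Implicit Arguments. Unset Strict Implicit. Unset Printing Implicit Defensive.
Import GRing.Theory.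
Local Open Scope ring_scope.

Lemma expr_eqN1_order (R : nzRingType) (x : R) (t r : nat) :
  (1 : R) != -1 -> x ^+ t = -1 ->
  (forall t' : nat, (0 < t')%N -> (t' < t)%N -> x ^+ t' != -1) ->
  x ^+ r = 1 -> (2 * t %| r)%N.
Proof.
move=> oneN1 xt tmin xr.
have t_gt0 : (0 < t)%N by case: t xt {tmin} => // /eqP; rewrite expr0 (negbTE oneN1).
have x2t : x ^+ (2 * t) = 1 by rewrite mulnC exprM xt expr2 mulrNN mulr1.
have xr' : x ^+ (r %% (2 * t)) = 1.
  by move: xr; rewrite {1}(divn_eq r (2 * t)%N) exprD mulnC exprM x2t expr1n mul1r.
have r'_lt : (r %% (2 * t) < 2 * t)%N by rewrite ltn_mod muln_gt0.
move: xr' r'_lt; rewrite /dvdn; set r' := (r %% _)%N => xr' r'_lt.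
rewrite eqn0Ngt; apply/negP => r'_gt0.
have [t_le|r'_lt_t] := leqP t r'.
  have: x ^+ (r' - t) == -1.
    by rewrite -eqr_oppLR -mulN1r -xt -exprD subnKC // xr'.
  case: (posnP (r' - t)) => [->|pos]; first by rewrite expr0 (negbTE oneN1).
  by rewrite (negbTE (tmin _ pos _)) //; lia.
have xtr' : x ^+ (t - r') = -1 by rewrite -xt -{2}(subnKC (ltnW r'_lt_t)) exprD xr' mul1r.
by move: (tmin (t - r')%N); rewrite xtr' eqxx; lia.
Qed.

Lemma Zp_nat_eq (d m n : nat) : (1 < d)%N -> (m%:R == n%:R :> 'Z_d) = (m == n %[mod d]).
Proof. by move=> d_gt1; rewrite -(inj_eq val_inj) /= !val_Zp_nat. Qed.

Lemma Zp_nat_eqN1 (d m : nat) : (1 < d)%N -> (m%:R == -1 :> 'Z_d) = (d %| m + 1)%N.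
Proof. by move=> d_gt1; rewrite -addr_eq0 -(natrD _ m 1) -[0]/(0%:R) Zp_nat_eq // mod0n. Qed.

Lemma Zp_oneN1 (d : nat) : (2 < d)%N -> (1 : 'Z_d) != -1.
Proof. by move=> d_gt2; rewrite -[1]/(1%:R) Zp_nat_eqN1 ?gtnNdvd //; lia. Qed.

Lemma expn_period_sign (p d t v : nat) : (2 < d)%N -> (d %| p ^ t + 1)%N ->
  (forall t' : nat, (0 < t')%N -> (t' < t)%N -> ~~ (d %| p ^ t' + 1)%N) ->
  (0 < v)%N -> p ^ v = 1 %[mod d] ->
  exists s : nat, [/\ (0 < s)%N, v = (2 * t * s)%N &
    (p ^ (t * s))%:R = (-1) ^+ s :> 'Z_d].
Proof.
move=> d_gt2 dt tmin v_gt0 pv; have d_gt1 : (1 < d)%N by lia.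
have xt : (p%:R : 'Z_d) ^+ t = -1 by apply/eqP; rewrite -natrX Zp_nat_eqN1.
have /dvdnP [s vE] : (2 * t %| v)%N.
  apply: (expr_eqN1_order (Zp_oneN1 d_gt2) xt).
    by move=> t' ? ?; rewrite -natrX Zp_nat_eqN1 ?tmin.
  by apply/eqP; rewrite -natrX -[1]/(1%:R) Zp_nat_eq // pv.
exists s; split; first by move: v_gt0; rewrite vE; case: s {vE}.
  by rewrite vE mulnC.
by rewrite natrX exprM xt.
Qed.

Lemma finField_card_gt1 (F : finFieldType) : (1 < #|F|)%N.
Proof.
apply: (@leq_trans #|[set (0 : F); 1]|); last exact: max_card.
by rewrite cards2 eq_sym oner_neq0.
Qed.

Lemma finField_unity (F : finFieldType) (x : F) : x != 0 -> x ^+ #|F|.-1 = 1.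
Proof.
move=> x_neq0; apply: (mulfI x_neq0); rewrite mulr1 -exprS prednK ?expf_card //.
exact: ltnW (finField_card_gt1 F).
Qed.

Lemma finField_prim_root (F : finFieldType) : {g : F | (#|F|.-1).-primitive_root g}.
Proof.
have n_gt0 : (0 < #|F|.-1)%N by rewrite -subn1 subn_gt0 finField_card_gt1.
have units : all (#|F|.-1).-unity_root (enum (predC1 (0 : F))).
  by apply/allP => x; rewrite mem_enum unity_rootE => /finField_unity ->.
have := has_prim_root n_gt0 units (enum_uniq _).
rewrite -cardE cardC1 leqnn => /(_ isT) /hasP /sig2W [g _ g_prim].
by exists g.
Qed.

Lemma predn_sqr (Q : nat) : ((Q * Q).-1 = (Q + 1) * Q.-1)%N.
Proof. nia. Qed.

Lemma finField_sqrt_card_gt1 (F : finFieldType) (Q : nat) :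
  #|F| = (Q * Q)%N -> (1 < Q)%N.
Proof. by move=> FQ; have := finField_card_gt1 F; rewrite FQ; nia. Qed.

Lemma sum_offdiag_pairs (T : finType) (C : {set T}) (v : T * T) :
  v \in setX C C ->
  (\sum_(w in setX C C) ((v.1 != w.1) && (v.2 != w.2) : nat))%N = (#|C|.-1 * #|C|.-1)%N.
Proof.
case: v => v1 v2; rewrite inE /= => /andP [v1C v2C].
have del x : x \in C -> #|C :\ x| = #|C|.-1 by move=> xC; rewrite (cardsD1 x C) xC.
rewrite -{1}(del v1 v1C) -(del v2 v2C) -cardsX -sum1_card.
rewrite big_mkcond [RHS]big_mkcond; apply: eq_bigr => -[w1 w2] _.
rewrite !inE /= (eq_sym w1) (eq_sym w2).
by case: (v1 == w1); case: (w1 \in C); case: (v2 == w2); case: (w2 \in C).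
Qed.

Section DthPowers.
Variables (F : finFieldType) (d : nat).

Definition dth_power (y : F) : bool := [exists z : F, (z != 0) && (z ^+ d == y)].

Lemma dth_power_neq0 y : dth_power y -> y != 0.
Proof. by case/existsP => z /andP [z_neq0 /eqP <-]; rewrite expf_neq0. Qed.

Lemma dth_powerM a b : dth_power a -> dth_power b -> dth_power (a * b).
Proof.
case/existsP => z /andP [z_neq0 /eqP <-]; case/existsP => w /andP [w_neq0 /eqP <-].
by apply/existsP; exists (z * w); rewrite mulf_neq0 //= exprMn.
Qed.

Lemma dth_powerV a : dth_power a -> dth_power a^-1.
Proof.
case/existsP => z /andP [z_neq0 /eqP <-].
by apply/existsP; exists z^-1; rewrite invr_eq0 z_neq0 /= exprVn.
Qed.

Lemma dth_powerMr b y : dth_power b -> dth_power (y * b) = dth_power y.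
Proof.
move=> Pb; apply/idP/idP => [Pyb|Py]; last exact: dth_powerM.
have -> : y = y * b / b by rewrite mulrK // unitfE dth_power_neq0.
by apply: dth_powerM => //; apply: dth_powerV.
Qed.

Lemma gp_cliqueP {S : {set F}} :
  reflect {in S &, forall x y, x != y -> dth_power (x - y)} (gp_clique d S).
Proof.
apply: (iffP forall_inP) => [cS x y xS yS xy | cS x xS].
  by have /forall_inP/(_ y yS)/implyP/(_ xy)/andP[] := cS x xS.
by apply/forall_inP => y yS; apply/implyP => xy; rewrite /gp_adj xy; exact: cS.
Qed.

Section CliqueSum.
Variables (S : {set F}) (a : F).
Hypotheses (cliqueS : gp_clique d S) (a_neq0 : a != 0) (a_notP : ~~ dth_power a).

Lemma clique_lin_inj : {in setX S S &, injective (fun u : F * F => u.1 + a * u.2)}.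
Proof.
move=> [x1 x2] [y1 y2]; rewrite !inE /= => /andP [x1S x2S] /andP [y1S y2S] eq_xy.
have diff : x1 - y1 = a * (y2 - x2).
  by rewrite -[x1](addrK (a * x2)) /= eq_xy; ring.
have [x2y2|x2y2] := eqVneq x2 y2.
  by move: diff; rewrite x2y2 subrr mulr0 => /eqP; rewrite subr_eq0 => /eqP ->.
have P2 : dth_power (y2 - x2) by apply: (gp_cliqueP cliqueS); rewrite // eq_sym.
have [x1y1|x1y1] := eqVneq x1 y1.
  move: diff; rewrite x1y1 subrr => /esym/eqP.
  by rewrite mulf_eq0 (negbTE a_neq0) (negbTE (dth_power_neq0 P2)).
have := gp_cliqueP cliqueS _ _ x1S y1S x1y1.
by rewrite diff dth_powerMr // (negbTE a_notP).
Qed.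

Lemma clique_card_sq : (#|S| * #|S| <= #|F|)%N.
Proof. by rewrite -cardsX -(card_in_imset clique_lin_inj) max_card. Qed.

Lemma clique_lin_sum1 (w : F) : (#|S| * #|S|)%N = #|F| ->
  (\sum_(u in setX S S) ((u.1 + a * u.2)%R == w))%N = 1%N.
Proof.
move=> S_sq.
have : w \in (fun u : F * F => u.1 + a * u.2) @: setX S S.
  suff -> : (fun u : F * F => u.1 + a * u.2) @: setX S S = setT by rewrite inE.
  by apply/eqP; rewrite eqEcard subsetT cardsT (card_in_imset clique_lin_inj) cardsX S_sq leqnn.
case/imsetP => u uS ->; rewrite (bigD1 u) //= eqxx big1 ?addn0 // => u' /andP [u'S u'u].
by case: eqP => // /(clique_lin_inj u'S uS) /eqP; rewrite (negbTE u'u).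
Qed.

End CliqueSum.
End DthPowers.

Arguments gp_cliqueP {F d S}.

Lemma gp_omega_clique (F : finFieldType) (d : nat) :
  exists2 C : {set F}, gp_clique d C & #|C| = gp_omega F d.
Proof.
have clique0 : gp_clique d (set0 : {set F}) by apply/forall_inP => x; rewrite inE.
rewrite /gp_omega (bigmax_eq_arg set0 clique0).
by case: arg_maxnP => // C cliqueC _; exists C.
Qed.

Section PrimitiveRoot.
Variables (F : finFieldType) (d : nat) (g : F).
Local Notation n := #|F|.-1.
Hypotheses (g_prim : n.-primitive_root g) (d_dvd_n : (d %| n)%N) (d_gt2 : (2 < d)%N).

Lemma prim_root_neq0 : g != 0.
Proof.
apply/eqP => g0; have := prim_expr_order g_prim.
by rewrite g0 expr0n eqn0Ngt (prim_order_gt0 g_prim) => /eqP; rewrite eq_sym oner_eq0.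
Qed.

Lemma prim_root_log x : x != 0 -> exists j, x = g ^+ j.
Proof. by move=> /finField_unity /(prim_rootP g_prim) [j ->]; exists j. Qed.

Lemma dth_power_expr m : dth_power d (g ^+ m) = (d %| m)%N.
Proof.
apply/idP/idP => [/existsP [z /andP [/prim_root_log [j ->] /eqP]] | /dvdnP [k ->]].
  rewrite -exprM => /eqP; rewrite (eq_prim_root_expr g_prim) => /eqP jm.
  by rewrite /dvdn -(modn_dvdm m d_dvd_n) -jm modn_dvdm // modnMl.
by apply/existsP; exists (g ^+ k); rewrite expf_neq0 ?prim_root_neq0 //= -exprM.
Qed.

Lemma dth_powerP y : dth_power d y -> exists i, y = g ^+ (d * i).
Proof.
move=> Py; have [j yE] := prim_root_log (dth_power_neq0 Py).
by move: Py; rewrite yE dth_power_expr => /dvdnP [i ->]; exists i; rewrite mulnC.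
Qed.

Lemma prim_root_not_dth_power : ~~ dth_power d g.
Proof. by rewrite -[g]expr1 dth_power_expr gtnNdvd //; lia. Qed.

Definition dth_powers : {set F} := [set y | dth_power d y].

Lemma card_dth_powers : (#|dth_powers| * d)%N = n.
Proof.
have d_gt0 : (0 < d)%N by lia.
have nd_gt0 : (0 < n %/ d)%N by rewrite divn_gt0 // dvdn_leq // (prim_order_gt0 g_prim).
have dn : (d * (n %/ d))%N = n by rewrite mulnC divnK.
have -> : dth_powers = [set g ^+ (d * i) | i : 'I_(n %/ d)].
  apply/setP => y; rewrite inE; apply/idP/imsetP => [/dth_powerP [i ->] | [i _ ->]].
    exists (Ordinal (ltn_pmod i nd_gt0)) => //=; apply/eqP.
    by rewrite (eq_prim_root_expr g_prim) muln_modr dn modn_mod.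
  by rewrite dth_power_expr dvdn_mulr.
rewrite card_imset ?card_ord ?divnK // => i j /eqP.
have lt_n k : (k < n %/ d)%N -> (d * k < n)%N by rewrite -{2}dn ltn_pmul2l.
rewrite (eq_prim_root_expr g_prim) !modn_small ?lt_n //.
by rewrite eqn_pmul2l // => /eqP /val_inj.
Qed.

Definition dth_power_sol_count : nat :=
  (\sum_(u in setX dth_powers dth_powers) ((u.1 + g * u.2)%R == g ^+ 2))%N.

Section MaximumClique.
Variable C : {set F}.
Hypotheses (cliqueC : gp_clique d C) (C_sq : (#|C| * #|C|)%N = #|F|).
Local Notation H := dth_powers.
Local Notation Q := #|C|.

Let clique_eqn (u v w : F * F) : nat :=
  u.1 * (v.1 - w.1) + u.2 * (g * (v.2 - w.2)) == g ^+ 2.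

Lemma sum_clique_eqn_w u v : u \in setX H H ->
  (\sum_(w in setX C C) clique_eqn u v w)%N = 1%N.
Proof.
case: u => u1 u2; rewrite !inE /= => /andP [P1 P2].
have u1_neq0 := dth_power_neq0 P1.
have P21 : dth_power d (u2 / u1) by rewrite dth_powerM ?dth_powerV.
set a := g * (u2 / u1).
have a_neq0 : a != 0 := mulf_neq0 prim_root_neq0 (dth_power_neq0 P21).
have a_notP : ~~ dth_power d a by rewrite dth_powerMr ?prim_root_not_dth_power.
rewrite -(clique_lin_sum1 cliqueC a_neq0 a_notP (v.1 + a * v.2 - g ^+ 2 / u1) C_sq).
apply: eq_bigr => -[w1 w2] _; rewrite /clique_eqn /=; congr nat_of_bool.
have factor : u1 * (v.1 - w1) + u2 * (g * (v.2 - w2)) - g ^+ 2 =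
              u1 * (v.1 + a * v.2 - g ^+ 2 / u1 - (w1 + a * w2)) by rewrite /a; field.
by rewrite -subr_eq0 factor mulf_eq0 (negbTE u1_neq0) subr_eq0 eq_sym.
Qed.

Lemma sum_clique_eqn_u v w : v \in setX C C -> w \in setX C C ->
  (\sum_(u in setX H H) clique_eqn u v w)%N =
  (((v.1 != w.1) && (v.2 != w.2)) * dth_power_sol_count)%N.
Proof.
case: v w => [v1 v2] [w1 w2]; rewrite !inE /= => /andP [v1C v2C] /andP [w1C w2C].
have g2_notP : ~~ dth_power d (g ^+ 2) by rewrite dth_power_expr gtnNdvd.
have gP_neq_g2 y : dth_power d y -> g * y != g ^+ 2.
  move=> Py; apply/eqP => gy; have yg : y = g by apply: (mulfI prim_root_neq0); rewrite gy expr2.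
  by move: Py; rewrite yg (negbTE prim_root_not_dth_power).
have [e1|ne1] := eqVneq v1 w1.
  rewrite big1 // => -[u1 u2]; rewrite !inE /= => /andP [_ P2].
  rewrite /clique_eqn e1 subrr mulr0 add0r /=; have [e2|ne2] := eqVneq v2 w2.
    by rewrite e2 subrr !mulr0 eq_sym expf_eq0 (negbTE prim_root_neq0) andbF.
  have P2' : dth_power d (v2 - w2) by apply: (gp_cliqueP cliqueC).
  by rewrite mulrCA (negbTE (gP_neq_g2 _ (dth_powerM P2 P2'))).
have P1' : dth_power d (v1 - w1) by apply: (gp_cliqueP cliqueC).
have [e2|ne2] := eqVneq v2 w2.
  rewrite big1 // => -[u1 u2]; rewrite !inE /= => /andP [P1 _].
  rewrite /clique_eqn e2 subrr !mulr0 addr0 /=; case: eqP => // h.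
  by move: (dth_powerM P1 P1'); rewrite h (negbTE g2_notP).
have P2' : dth_power d (v2 - w2) by apply: (gp_cliqueP cliqueC).
rewrite mul1n /dth_power_sol_count.
rewrite [RHS](reindex_inj (h := fun u : F * F => (u.1 * (v1 - w1), u.2 * (v2 - w2)))) /=.
  by apply: eq_big => [u|u _]; rewrite ?inE /= ?dth_powerMr // /clique_eqn /= mulrCA.
move=> [x1 x2] [y1 y2] /= [] /(mulIf (dth_power_neq0 P1')) ->.
by move/(mulIf (dth_power_neq0 P2')) ->.
Qed.

Lemma clique_double_count :
  (#|H| * #|H| * (Q * Q) = Q * Q * (Q.-1 * Q.-1 * dth_power_sol_count))%N.
Proof.
transitivity (\sum_(u in setX H H) \sum_(v in setX C C) \sum_(w in setX C C) clique_eqn u v w)%N.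
  rewrite -(cardsX H H) -(cardsX C C) -sum_nat_const; apply: eq_bigr => u uH.
  by rewrite -sum1_card; apply: eq_bigr => v _; rewrite sum_clique_eqn_w.
rewrite exchange_big -cardsX -sum_nat_const /=; apply: eq_bigr => v vC.
rewrite exchange_big /= (eq_bigr _ (fun w wC => sum_clique_eqn_u vC wC)).
by rewrite -big_distrl /= sum_offdiag_pairs.
Qed.

Lemma clique_sqrt_dvd : (d %| Q + 1)%N.
Proof.
have Q_gt1 := finField_sqrt_card_gt1 (esym C_sq).
have nE : #|F|.-1 = ((Q + 1) * Q.-1)%N by rewrite -C_sq predn_sqr.
have pos : (0 < Q.-1 * Q.-1 * (Q * Q))%N by rewrite !muln_gt0; lia.
have key : ((Q + 1) * Q.-1 * ((Q + 1) * Q.-1) * (Q * Q) =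
            d * d * dth_power_sol_count * (Q.-1 * Q.-1 * (Q * Q)))%N.
  rewrite -nE -card_dth_powers.
  transitivity (d * d * (#|H| * #|H| * (Q * Q)))%N; first by ring.
  by rewrite clique_double_count; ring.
have /eqP : ((Q + 1) ^ 2 * (Q.-1 * Q.-1 * (Q * Q)) =
             d ^ 2 * dth_power_sol_count * (Q.-1 * Q.-1 * (Q * Q)))%N.
  by rewrite -!mulnn -key; ring.
rewrite eqn_pmul2r // => /eqP sqE.
by rewrite -(dvdn_pexp2r _ _ (isT : 0 < 2)%N) sqE dvdn_mulr.
Qed.

End MaximumClique.

Lemma gp_omega_le_sqrt Q : #|F| = (Q * Q)%N -> (gp_omega F d <= Q)%N.
Proof.
move=> FQ; apply/bigmax_leqP => S cliqueS; rewrite leqNgt; apply/negP => Q_lt.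
have := clique_card_sq cliqueS prim_root_neq0 prim_root_not_dth_power.
by rewrite FQ leqNgt ltn_mul.
Qed.

Lemma gp_omega_lt_sqrt Q :
  #|F| = (Q * Q)%N -> ~~ (d %| Q + 1)%N -> (gp_omega F d < Q)%N.
Proof.
move=> FQ; apply: contraNT; rewrite -leqNgt => Q_le.
have omegaQ : gp_omega F d = Q by apply/eqP; rewrite eqn_leq gp_omega_le_sqrt.
have [C cliqueC CE] := gp_omega_clique F d.
by rewrite -omegaQ -CE; apply: clique_sqrt_dvd cliqueC _; rewrite CE omegaQ.
Qed.

Definition frobenius_fixed (Q : nat) : {set F} := [set x | x ^+ Q == x].

Lemma frobenius_fixed_dth_power Q (w : F) : #|F| = (Q * Q)%N -> (d %| Q + 1)%N ->
  w != 0 -> w ^+ Q = w -> dth_power d w.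
Proof.
move=> FQ dQ /prim_root_log [j ->]; rewrite -exprM => /eqP.
have Q_gt0 : (0 < Q)%N by have := finField_sqrt_card_gt1 FQ; lia.
rewrite (eq_prim_root_expr g_prim) eqn_mod_dvd ?leq_pmulr //.
rewrite FQ predn_sqr -{2}[j]muln1 -mulnBr subn1 dvdn_pmul2r.
  by move=> /(dvdn_trans dQ); rewrite dth_power_expr.
by have := finField_sqrt_card_gt1 FQ; lia.
Qed.

Lemma gp_clique_frobenius_fixed Q : [pchar F].-nat Q -> #|F| = (Q * Q)%N ->
  (d %| Q + 1)%N -> gp_clique d (frobenius_fixed Q).
Proof.
move=> Q_pchar FQ dQ; apply/gp_cliqueP => x y; rewrite !inE => /eqP xQ /eqP yQ xy.
apply: (frobenius_fixed_dth_power FQ dQ); first by rewrite subr_eq0.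
have := exprDn_pchar (x - y) y Q_pchar; rewrite subrK xQ yQ => xE.
by rewrite {2}xE addrK.
Qed.

Lemma card_frobenius_fixed Q : #|F| = (Q * Q)%N -> (Q <= #|frobenius_fixed Q|)%N.
Proof.
move=> FQ; have Q_gt1 := finField_sqrt_card_gt1 FQ.
have nE : #|F|.-1 = ((Q + 1) * Q.-1)%N by rewrite FQ predn_sqr.
pose roots := [set g ^+ ((Q + 1) * val i) | i : 'I_Q.-1].
have roots_inj : injective (fun i : 'I_Q.-1 => g ^+ ((Q + 1) * val i)).
  move=> i j /eqP; rewrite (eq_prim_root_expr g_prim) nE !modn_small ?ltn_pmul2l ?addn1 ?ltn_ord //.
  by rewrite eqn_pmul2l // => /eqP /val_inj.
have roots_sub : roots \subset frobenius_fixed Q :\ 0.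
  apply/subsetP => y /imsetP [k _ ->]; rewrite !inE expf_neq0 ?prim_root_neq0 //=.
  rewrite -exprM (eq_prim_root_expr g_prim) nE.
  by rewrite (_ : (Q + 1) * k * Q = k * ((Q + 1) * Q.-1) + (Q + 1) * k)%N ?modnMDl //; nia.
rewrite (cardsD1 0) inE expr0n gtn_eqF ?eqxx; last by lia.
have := subset_leq_card roots_sub; rewrite card_imset // card_ord -(leq_add2l 1).
by rewrite add1n prednK // ltnW.
Qed.


Lemma gp_omega_sqrt Q : [pchar F].-nat Q -> #|F| = (Q * Q)%N -> (d %| Q + 1)%N ->
  gp_omega F d = Q.
Proof.
move=> Q_pchar FQ dQ; apply/eqP; rewrite eqn_leq gp_omega_le_sqrt //=.
apply: leq_trans (card_frobenius_fixed FQ) _.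
exact/leq_bigmax_cond/gp_clique_frobenius_fixed.
Qed.

End PrimitiveRoot.

Local Close Scope ring_scope.

Theorem proposition4p6 (p d t v : nat) (F : finFieldType) :
  prime p -> odd p ->
  odd d -> (3 <= d)%N ->
  (0 < t)%N -> (d %| p ^ t + 1)%N ->
  (forall t' : nat, (0 < t')%N -> (t' < t)%N -> ~~ (d %| p ^ t' + 1)%N) ->
  (0 < v)%N -> #|F| = (p ^ v)%N -> (p ^ v = 1 %[mod 2 * d])%N ->
  exists s : nat, [/\ (0 < s)%N, v = (2 * t * s)%N,
    (~~ odd s -> gp_omega F d < p ^ (v %/ 2))%N &
    (odd s -> (d %| p ^ (v %/ 2) + 1)%N /\ gp_omega F d = (p ^ (v %/ 2))%N)].
Proof.
move=> p_prime _ _ d_gt2 _ dt tmin v_gt0 cardF pv.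
have pv_d : p ^ v = 1 %[mod d].
  by rewrite -(modn_dvdm _ (dvdn_mull 2 (dvdnn d))) pv modn_dvdm // dvdn_mull.
have [s [s_gt0 vE Q_sign]] := expn_period_sign d_gt2 dt tmin v_gt0 pv_d.
have -> : (v %/ 2 = t * s)%N by rewrite vE -mulnA mulKn.
have FQ : #|F| = (p ^ (t * s) * p ^ (t * s))%N by rewrite cardF -expnD vE; congr (p ^ _); lia.
have Q_pchar : [pchar F]%R.-nat (p ^ (t * s)).
  by rewrite (eq_pnat _ (pcharf_eq (card_finPcharP cardF p_prime))) pnatX pnat_id.
have d_dvd_n : (d %| #|F|.-1)%N.
  by rewrite cardF -subn1 -eqn_mod_dvd ?expn_gt0 ?prime_gt0 // pv_d.
have [g g_prim] := finField_prim_root F.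
have dQ : (d %| p ^ (t * s) + 1)%N = odd s.
  rewrite -Zp_nat_eqN1 1?ltnW // Q_sign -signr_odd.
  by case: (odd s); rewrite ?expr1 ?expr0 ?eqxx // (negbTE (Zp_oneN1 d_gt2)).
exists s; split=> //.
  by move=> s_even; apply: (gp_omega_lt_sqrt g_prim d_dvd_n d_gt2 FQ); rewrite dQ.
move=> s_odd; have dQ_odd : (d %| p ^ (t * s) + 1)%N by rewrite dQ.
by split; last exact: (gp_omega_sqrt g_prim d_dvd_n d_gt2 Q_pchar FQ dQ_odd).
Qed.
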